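(* Let $\Gamma$ be a metric graph and $D$ a vertex-supported effective divisor on $\Gamma$. Then the cell complex $|D|$ has finitely many cells.
   Context: A metric graph $\Gamma=(V,E)$ is a connected undirected graph whose edges have positive real lengths $M_e$. A divisor is a finite formal $\mathbb{Z}$-combination of points of $\Gamma$; effective means all coefficients are $\ge 0$; vertex-supported means its support lies in $V$. A rational function is a continuous function $\Gamma\to\mathbb{R}$ that is piecewise linear on each edge with finitely many pieces and integer slopes; $(f)=\sum_x \mathrm{ord}_x(f)x$, where $\mathrm{ord}_x(f)$ is the sum of outgoing slopes at $x$. $R(D)=\{f: D+(f)\text{ effective}\}$ and $|D|=\{D+(f):f\in R(D)\}$. Cells of $|D|$: identifying each open edge $e$ with $(0,M_e)$, a cell is given by data consisting of nonnegative integers $d_v$ ($v\in V$), ordered partitions $d_e=\sum_{i=1}^{r_e}d_e^i$ into positive integers on some edges $e$, and integers $m_e$ ($e\in E$); $L\in|D|$ lies in the cell iff $L(v)=d_v$ for all $v$, on each edge with a partition $L|_{e^\circ}=\sum_i d_e^i x_i$ with $0<x_1<\dots<x_{r_e}<M_e$, $L$ vanishes on the interiors of the other edges, and every $f\in R(D)$ with $L=D+(f)$ has outgoing slope $m_e$ at the point $0$ of $e$ for every $e$. These cells make $|D|$ a cell complex. *)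

From mathcomp Require Import all_boot.
From Stdlib Require Import Reals ZArith ClassicalEpsilon.

Set Implicit Arguments.
Unset Strict Implicit.
Unset Printing Implicit Defensive.

Section MetricGraph.

(* A metric graph: finite vertex set V, finite edge set E; each edge e is
   identified with the open interval (0, len e), its point 0 being the
   vertex [src e] and its point [len e] the vertex [tgt e]. *)
Variables (V E : finType) (src tgt : E -> V) (len : E -> R).

Definition adjacent : rel V := fun u v =>
  [exists e : E, ((src e == u) && (tgt e == v)) || ((src e == v) && (tgt e == u))].
Definition connected_graph : Prop := forall u v : V, connect adjacent u v.

(* Points of the metric graph: vertices, and interior points (e, t) with
   0 < t < len e.  Terms [PE e t] with t outside (0, len e) are junk. *)
Inductive pt : Type := PV of V | PE of E & R.

Definition valid_pt (x : pt) : Prop :=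
  match x with PV _ => True | PE e t => (0 < t < len e)%R end.

(* Divisors: integer coefficients on points (only valid points matter). *)
Definition divisor := pt -> Z.
Definition effective (D : divisor) : Prop := forall x, valid_pt x -> (0 <= D x)%Z.
Definition vertex_supported (D : divisor) : Prop := forall e t, D (PE e t) = 0%Z.

Definition pl_int (M : R) (g : R -> R) : Prop :=
  exists (bs : seq R) (ss : seq Z),
    size bs = (size ss).+1 /\ nth 0%R bs 0 = 0%R /\ nth 0%R bs (size ss) = M /\
    forall i, (i < size ss)%nat ->
      (nth 0%R bs i < nth 0%R bs i.+1)%R /\
      forall t, (nth 0%R bs i <= t <= nth 0%R bs i.+1)%R ->
        g t = (g (nth 0%R bs i) + IZR (nth 0%Z ss i) * (t - nth 0%R bs i))%R.

(* A rational function, given by its restrictions f e : [0, len e] -> R to the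
   (closed) edges; continuity at the vertices is the existence of vertex values. *)
Definition rational_fun (f : E -> R -> R) : Prop :=
  (exists h : V -> R, forall e, f e 0%R = h (src e) /\ f e (len e) = h (tgt e)) /\
  forall e, pl_int (len e) (f e).

Definition rslope (g : R -> R) (t : R) : R :=
  epsilon (inhabits 0%R) (fun s => exists eps, (0 < eps)%R /\
     forall h, (0 < h < eps)%R -> g (t + h)%R = (g t + s * h)%R).
Definition lslope (g : R -> R) (t : R) : R :=
  epsilon (inhabits 0%R) (fun s => exists eps, (0 < eps)%R /\
     forall h, (0 < h < eps)%R -> g (t - h)%R = (g t + s * h)%R).

Definition ord (f : E -> R -> R) (x : pt) : R :=
  match x with
  | PV v => (\big[Rplus/0%R]_(e : E | src e == v) rslope (f e) 0%R +
             \big[Rplus/0%R]_(e : E | tgt e == v) lslope (f e) (len e))%R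
  | PE e t => (rslope (f e) t + lslope (f e) t)%R
  end.

Definition is_div_of (D : divisor) (f : E -> R -> R) (L : divisor) : Prop :=
  (forall x, valid_pt x -> IZR (L x) = (IZR (D x) + ord f x)%R) /\
  (forall x, ~ valid_pt x -> L x = 0%Z).

Definition in_RD (D : divisor) (f : E -> R -> R) : Prop :=
  rational_fun f /\
  (forall x, valid_pt x -> (0 <= IZR (D x) + ord f x)%R).

Definition in_linsys (D : divisor) (L : divisor) : Prop :=
  exists f, in_RD D f /\ is_div_of D f L.

Fixpoint pcoef (xs : seq R) (ps : seq nat) (t : R) : Z :=
  match xs, ps with
  | x :: xs', p :: ps' => if Req_EM_T t x then Z.of_nat p else pcoef xs' ps' t
  | _, _ => 0%Z
  end.

(* Cell data: vertex multiplicities d_v, on each edge an ordered partition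
   (d_e^1, ..., d_e^{r_e}) into positive integers (the empty list meaning
   that the edge carries no partition, i.e. L vanishes on its interior),
   and integer slopes m_e. *)
Definition cell_data : Type := ((V -> nat) * (E -> seq nat) * (E -> Z))%type.

Definition in_cell (D : divisor) (c : cell_data) (L : divisor) : Prop :=
  let: (d, p, m) := c in
  in_linsys D L /\
  (forall v, L (PV v) = Z.of_nat (d v)) /\
  (forall e, all (fun k => (0 < k)%nat) (p e) /\
     exists xs : seq R, size xs = size (p e) /\
       (forall i, (i < size xs)%nat -> (0 < nth 0%R xs i)%R /\ (nth 0%R xs i < len e)%R) /\
       (forall i, (i.+1 < size xs)%nat -> (nth 0%R xs i < nth 0%R xs i.+1)%R) /\
       (forall t, (0 < t < len e)%R -> L (PE e t) = pcoef xs (p e) t)) /\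
  (forall f, in_RD D f -> is_div_of D f L -> forall e, rslope (f e) 0%R = IZR (m e)).

Definition cell_nonempty (D : divisor) (c : cell_data) : Prop :=
  exists L, in_cell D c L.

Definition finitely_many_cells (D : divisor) : Prop :=
  exists cs : seq cell_data, forall c, cell_nonempty D c -> List.In c cs.

End MetricGraph.

(* Let f be a rational function with D + (f) effective.  Since D vanishes on
   the open edges, f is convex along every edge: its slopes increase, and the
   number of chips that D + (f) places inside an edge is at most the total
   increase of slope along it.  Summing the vertex inequalities
   D(v) + ord_v(f) >= 0 over an upper level set S of f, every edge leaving S
   does so with negative slope, so each single such slope is at least -deg D.
   Taking for S the level sets through the two endpoints of an edge bounds the
   outgoing slopes at both ends by deg D in absolute value.  Hence the vertex
   coefficients, the edge degrees and the slopes m_e of a nonempty cell are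
   bounded in terms of deg D and #|E|, and only finitely many cell data obey
   such bounds. *)

From HB Require Import structures.
From mathcomp Require Import all_boot zify.
From Stdlib Require Import Reals ZArith Lra Lia Psatz.
From Stdlib Require Import ClassicalEpsilon FunctionalExtensionality.
Set Implicit Arguments.
Unset Strict Implicit.
Unset Printing Implicit Defensive.
Local Open Scope R_scope.

Lemma epsilon_local_slope (phi : R -> R) (c s eps : R) : 0 < eps ->
  (forall h, 0 < h < eps -> phi h = c + s * h) ->
  epsilon (inhabits 0) (fun s' => exists eps', 0 < eps' /\
    forall h, 0 < h < eps' -> phi h = c + s' * h) = s.
Proof.
move=> eps_pos Hs; set P := fun s' => _.
have [eps' [eps'_pos Hs']] : P (epsilon (inhabits 0) P).
  by apply: epsilon_spec; exists s, eps.
pose h := Rmin eps eps' / 2.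
have h_pos : 0 < h by have := Rmin_glb_lt _ _ _ eps_pos eps'_pos; rewrite /h; lra.
have h_eps : h < eps by have := Rmin_l eps eps'; rewrite /h; lra.
have h_eps' : h < eps' by have := Rmin_r eps eps'; rewrite /h; lra.
have E := Hs h (conj h_pos h_eps); have E' := Hs' h (conj h_pos h_eps').
by apply: (Rmult_eq_reg_r h); lra.
Qed.

Lemma rslope_eq (g : R -> R) (t s eps : R) : 0 < eps ->
  (forall h, 0 < h < eps -> g (t + h) = g t + s * h) -> rslope g t = s.
Proof. exact: (@epsilon_local_slope (fun h => g (t + h)) (g t) s eps). Qed.

Lemma lslope_eq (g : R -> R) (t s eps : R) : 0 < eps ->
  (forall h, 0 < h < eps -> g (t - h) = g t + s * h) -> lslope g t = s.
Proof. exact: (@epsilon_local_slope (fun h => g (t - h)) (g t) s eps). Qed.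

Lemma chain_lt (u : nat -> R) (n : nat) :
  (forall i, (i.+1 < n)%nat -> u i < u i.+1) ->
  forall i j, (i < j < n)%nat -> u i < u j.
Proof.
move=> step i j /andP[ij jn]; elim: j ij jn => // j IH.
rewrite ltnS leq_eqVlt => /orP[/eqP <-|ij] jn; first exact: step.
have := step j jn; have := IH ij (ltnW jn); lra.
Qed.

Section PiecewiseLinear.

Variables (M : R) (g : R -> R) (bs : seq R) (ss : seq Z).
Hypothesis bs_first : nth 0 bs 0 = 0.
Hypothesis bs_last : nth 0 bs (size ss) = M.
Hypothesis pieces : forall i, (i < size ss)%nat ->
  nth 0 bs i < nth 0 bs i.+1 /\
  forall t, nth 0 bs i <= t <= nth 0 bs i.+1 ->
    g t = g (nth 0 bs i) + IZR (nth 0%Z ss i) * (t - nth 0 bs i).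

Local Notation k := (size ss).
Local Notation B i := (nth 0 bs i).
Local Notation S i := (IZR (nth 0%Z ss i)).

Lemma breaks_lt i j : (i < j <= k)%nat -> B i < B j.
Proof.
move=> ijk; apply: (@chain_lt (fun i => B i) k.+1) ijk => l.
by rewrite ltnS => /pieces [].
Qed.

Lemma rslope_piece i t : (i < k)%nat -> B i <= t < B i.+1 -> rslope g t = S i.
Proof.
move=> ik [t1 t2]; have [_ lin] := pieces ik.
apply: (@rslope_eq _ _ _ (B i.+1 - t)) => [|h [h1 h2]]; first lra.
rewrite (lin (t + h)); last lra.
rewrite (lin t); last lra.
ring.
Qed.

Lemma lslope_piece i t : (i < k)%nat -> B i < t <= B i.+1 -> lslope g t = - S i.
Proof.
move=> ik [t1 t2]; have [_ lin] := pieces ik.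
apply: (@lslope_eq _ _ _ (t - B i)) => [|h [h1 h2]]; first lra.
rewrite (lin (t - h)); last lra.
rewrite (lin t); last lra.
ring.
Qed.

Lemma piece_right t : 0 <= t < M -> exists2 i, (i < k)%nat & B i <= t < B i.+1.
Proof.
move=> [t0 tM].
suff: forall n, (n <= k)%nat -> t < B n -> exists2 i, (i < n)%nat & B i <= t < B i.+1.
  by apply; rewrite ?bs_last.
elim=> [|n IH] nk tn; first by rewrite bs_first in tn; lra.
case: (Rle_lt_dec (B n) t) => [nt|tn']; first by exists n.
by have [i ilt Hi] := IH (ltnW nk) tn'; exists i => //; apply: ltnW.
Qed.

Lemma piece_left t : 0 < t <= M -> exists2 i, (i < k)%nat & B i < t <= B i.+1.
Proof.
move=> [t0 tM].
suff: forall n, (n <= k)%nat -> t <= B n -> exists2 i, (i < n)%nat & B i < t <= B i.+1.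
  by apply; rewrite ?bs_last.
elim=> [|n IH] nk tn; first by rewrite bs_first in tn; lra.
case: (Rlt_le_dec (B n) t) => [nt|tn']; first by exists n.
by have [i ilt Hi] := IH (ltnW nk) tn'; exists i => //; apply: ltnW.
Qed.

Hypothesis jumps_ge0 : forall t, 0 < t < M -> 0 <= rslope g t + lslope g t.

Lemma slope_leS i : (i.+1 < k)%nat -> S i <= S i.+1.
Proof.
move=> ik.
have b_pos : 0 < B i.+1 by rewrite -{1}bs_first; apply: breaks_lt; lia.
have b_M : B i.+1 < M by rewrite -bs_last; apply: breaks_lt; lia.
have [b12 _] := pieces ik; have [b01 _] := pieces (ltnW ik).
have := jumps_ge0 (conj b_pos b_M).
by rewrite (rslope_piece (i := i.+1)) ?(lslope_piece (i := i)) //; try lra; exact: ltnW.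
Qed.

Lemma slope_le i j : (i <= j < k)%nat -> S i <= S j.
Proof.
move=> /andP[ij jk]; elim: j ij jk => [|j IH]; first by rewrite leqn0 => /eqP ->; lra.
rewrite leq_eqVlt => /orP[/eqP -> _|ij jk]; first lra.
have := slope_leS jk; have := IH ij (ltnW jk); lra.
Qed.

Lemma rslope_le_lslope x y : 0 <= x -> x < y -> y <= M -> rslope g x <= - lslope g y.
Proof.
move=> x0 xy yM.
have [i ik Hx] := piece_right (conj x0 (Rlt_le_trans _ _ _ xy yM)).
have [j jk Hy] := piece_left (conj (Rle_lt_trans _ _ _ x0 xy) yM).
rewrite (rslope_piece ik Hx) (lslope_piece jk Hy) Ropp_involutive.
case: (leqP i j) => [ij|ji]; first by apply: slope_le; rewrite ij.
have : B j.+1 <= B i.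
  move: ji; rewrite leq_eqVlt => /orP[/eqP ->|ji]; first lra.
  by apply: Rlt_le; apply: breaks_lt; rewrite ji ltnW.
lra.
Qed.

Hypothesis M_pos : 0 < M.

Lemma chord_between_slopes : rslope g 0 * M <= g M - g 0 <= - lslope g M * M.
Proof.
have k_pos : (0 < k)%nat by case: posnP bs_last => // ->; rewrite bs_first; lra.
have kk : (k.-1 < k)%nat by rewrite prednK.
have r0 : rslope g 0 = S 0.
  apply: (rslope_piece (t := 0) k_pos); have := proj1 (pieces k_pos).
  rewrite bs_first; lra.
have lM : lslope g M = - S k.-1.
  apply: (lslope_piece (t := M) kk); have := proj1 (pieces kk).
  rewrite prednK // bs_last; lra.
rewrite r0 lM Ropp_involutive.
suff chord n : (n <= k)%nat -> S 0 * B n <= g (B n) - g 0 <= S k.-1 * B n.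
  by have := chord k (leqnn k); rewrite bs_last.
elim: n => [|n IH] nk; first by rewrite bs_first; lra.
have [bn lin] := pieces nk.
rewrite (lin (B n.+1)); last lra.
have [IH1 IH2] := IH (ltnW nk).
have d : 0 <= B n.+1 - B n by lra.
have := Rmult_le_compat_r _ _ _ d (slope_le (i := 0) (j := n) nk).
have := Rmult_le_compat_r _ _ _ d (slope_le (i := n) (j := k.-1) ltac:(lia)).
lra.
Qed.

End PiecewiseLinear.

Lemma pl_int_slope_drop (M : R) (g : R -> R) : pl_int M g ->
  (forall t, 0 < t < M -> 0 <= rslope g t + lslope g t) ->
  forall x y, 0 <= x -> x < y -> y <= M -> rslope g x <= - lslope g y.
Proof.
by move=> [bs [ss [_ [b0 [bM pieces]]]]]; apply: (rslope_le_lslope b0 bM pieces).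
Qed.

Lemma pl_int_chord (M : R) (g : R -> R) : 0 < M -> pl_int M g ->
  (forall t, 0 < t < M -> 0 <= rslope g t + lslope g t) ->
  rslope g 0 * M <= g M - g 0 <= - lslope g M * M.
Proof.
move=> M_pos [bs [ss [_ [b0 [bM pieces]]]]] jumps.
exact: (chord_between_slopes b0 bM pieces).
Qed.

Lemma pcoef_nth (xs : seq R) (ps : seq nat) i :
  size xs = size ps ->
  (forall i j, (i < j < size xs)%nat -> nth 0 xs i < nth 0 xs j) ->
  (i < size xs)%nat -> pcoef xs ps (nth 0 xs i) = Z.of_nat (nth 0%nat ps i).
Proof.
elim: xs ps i => [|x xs IH] [|p ps] [|i] //= [sz] incr il.
  by case: Req_dec_T.
case: Req_dec_T => [x_eq|_] /=.
  by have := incr 0%nat i.+1 il; rewrite /= x_eq; lra.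
by apply: IH => // i' j' ij'; apply: (incr i'.+1 j'.+1).
Qed.

Lemma sumn_le_slope_drop (g : R -> R) (lo M : R)
  (drop : forall x y, lo <= x -> x < y -> y <= M -> rslope g x <= - lslope g y)
  (xs : seq R) (ps : seq nat) (u : R) :
  size xs = size ps -> lo <= u < M ->
  (forall i j, (i < j < size xs)%nat -> nth 0 xs i < nth 0 xs j) ->
  (forall i, (i < size xs)%nat -> u < nth 0 xs i < M) ->
  (forall i, (i < size xs)%nat ->
     INR (nth 0%nat ps i) = rslope g (nth 0 xs i) + lslope g (nth 0 xs i)) ->
  INR (sumn ps) <= - lslope g M - rslope g u.
Proof.
elim: xs ps u => [|x xs IH] [|p ps] u //= sz [lo_u u_M] incr bnd jump.
  by have := drop u M lo_u u_M (Rle_refl M); lra.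
have [u_x x_M] : u < x < M := bnd 0%nat erefl.
have tail : INR (sumn ps) <= - lslope g M - rslope g x.
  apply: IH => [||i j ij|i il|i il]; [by case: sz|lra| | |].
  - exact: (incr i.+1 j.+1).
  - by have := incr 0%nat i.+1 il; have := bnd i.+1 il; rewrite /=; lra.
  - exact: (jump i.+1).
have := jump 0%nat erefl; have := drop u x lo_u u_x (Rlt_le _ _ x_M).
rewrite plus_INR /=; lra.
Qed.

HB.instance Definition _ := Monoid.isComLaw.Build R 0 Rplus
  (fun x y z => esym (Rplus_assoc x y z)) Rplus_comm Rplus_0_l.

Lemma sumR_le (I : finType) (P : pred I) (F G : I -> R) :
  (forall i, P i -> F i <= G i) ->
  \big[Rplus/0]_(i | P i) F i <= \big[Rplus/0]_(i | P i) G i.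
Proof.
by move=> FG; apply: big_ind2 => // [|x1 x2 y1 y2]; [lra|rewrite /=; lra].
Qed.

Lemma sumR_ge0 (I : finType) (P : pred I) (F : I -> R) :
  (forall i, P i -> 0 <= F i) -> 0 <= \big[Rplus/0]_(i | P i) F i.
Proof. by move=> F0; have := @sumR_le I P (fun=> 0) F F0; rewrite big1_eq. Qed.

Lemma sumR_le0 (I : finType) (P : pred I) (F : I -> R) :
  (forall i, P i -> F i <= 0) -> \big[Rplus/0]_(i | P i) F i <= 0.
Proof. by move=> F0; have := @sumR_le I P F (fun=> 0) F0; rewrite big1_eq. Qed.

Lemma sumR_term_le (I : finType) (F : I -> R) i :
  (forall j, 0 <= F j) -> F i <= \big[Rplus/0]_j F j.
Proof.
move=> F0; rewrite (bigD1 i) //=.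
have := sumR_ge0 (P := fun j => j != i) (fun j _ => F0 j); lra.
Qed.

Lemma sumR_le_sub (I : finType) (P : pred I) (F : I -> R) :
  (forall i, 0 <= F i) -> \big[Rplus/0]_(i | P i) F i <= \big[Rplus/0]_i F i.
Proof.
move=> F0; rewrite big_mkcond; apply: sumR_le => i _.
by case: (P i); [apply: Rle_refl|apply: F0].
Qed.

Section BoundarySlopes.

Variables (V E : finType) (src tgt : E -> V) (a b : E -> R).

Definition out_slope (v : V) : R :=
  \big[Rplus/0]_(e : E | src e == v) a e + \big[Rplus/0]_(e : E | tgt e == v) b e.

Definition boundary_slope (S : pred V) (e : E) : R :=
  (if S (src e) then a e else 0) + (if S (tgt e) then b e else 0).

Lemma sum_incident (S : pred V) (end_ : E -> V) (c : E -> R) :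
  \big[Rplus/0]_(v | S v) \big[Rplus/0]_(e | end_ e == v) c e =
  \big[Rplus/0]_e (if S (end_ e) then c e else 0).
Proof.
rewrite -big_mkcond (partition_big end_ S) //; apply: eq_bigr => v Sv.
by apply: eq_bigl => e; case: eqP => [->|_]; rewrite ?Sv ?andbF.
Qed.

Lemma sum_out_slope (S : pred V) :
  \big[Rplus/0]_(v | S v) out_slope v = \big[Rplus/0]_e boundary_slope S e.
Proof. by rewrite big_split /= !sum_incident -big_split. Qed.

Lemma boundary_slope_ge (S : pred V) (w : V -> R) :
  (forall v, 0 <= w v) -> (forall v, 0 <= w v + out_slope v) ->
  (forall e, boundary_slope S e <= 0) ->
  forall e, - (\big[Rplus/0]_v w v) <= boundary_slope S e.
Proof.
move=> w_ge0 vertex_ge0 bnd_le0 e.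
have total : 0 <= \big[Rplus/0]_(v | S v) (w v + out_slope v) by apply: sumR_ge0.
rewrite big_split /= sum_out_slope (bigD1 e) //= in total.
have := sumR_le_sub S w_ge0.
have := sumR_le0 (P := fun e' => e' != e) (fun e' _ => bnd_le0 e').
lra.
Qed.

End BoundarySlopes.

Lemma mem_In (T : eqType) (x : T) (s : seq T) : x \in s -> List.In x s.
Proof. by elim: s => // y s IH; rewrite in_cons => /orP[/eqP ->|/IH]; [left|right]. Qed.

Lemma cover_by_finType (F : finType) (T : Type) (phi : F -> T) (P : T -> Prop) :
  (forall c, P c -> exists x, phi x = c) ->
  exists cs : seq T, forall c, P c -> List.In c cs.
Proof.
move=> cover; exists (map phi (enum F)) => c /cover [x <-].
by apply: List.in_map; apply: mem_In; rewrite mem_enum.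
Qed.

Lemma size_le_sumn (s : seq nat) : all (fun k => 0 < k)%nat s -> (size s <= sumn s)%nat.
Proof. by elim: s => //= x s IH /andP[x_pos /IH]; lia. Qed.

Lemma mem_le_sumn (s : seq nat) x : x \in s -> (x <= sumn s)%nat.
Proof. by elim: s => // y s IH; rewrite in_cons => /orP[/eqP ->|/IH] /=; lia. Qed.

Definition cell_bounded (V E : finType) (N : nat) (c : cell_data V E) : Prop :=
  let: (d, p, m) := c in
  (forall v, (d v <= N)%nat) /\
  (forall e, all (fun k => 0 < k)%nat (p e) /\ (sumn (p e) <= N)%nat) /\
  (forall e, (Z.abs (m e) <= Z.of_nat N)%Z).

Lemma cell_bounded_finite (V E : finType) (N : nat) :
  exists cs, forall c : cell_data V E, cell_bounded N c -> List.In c cs.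
Proof.
pose F := ({ffun V -> 'I_N.+1} * {ffun E -> {bseq N of 'I_N.+1}} *
           {ffun E -> 'I_(N + N).+1})%type.
apply: (@cover_by_finType F _ (fun x => (fun v => val (x.1.1 v),
  fun e => map val (x.1.2 e : seq _), fun e => Z.of_nat (x.2 e) - Z.of_nat N)%Z)).
move=> [[d p] m] [d_le [p_le m_le]].
exists ([ffun v => inord (d v)], [ffun e => insub_bseq N (map inord (p e))],
        [ffun e => inord (Z.to_nat (m e + Z.of_nat N))]).
congr (_, _, _); apply: functional_extensionality => x; rewrite ffunE.
- by apply: inordK; rewrite ltnS.
- have [pos sum_le] := p_le x.
  rewrite /insub_bseq insubdK; last first.
    by rewrite -topredE /= size_map (leq_trans (size_le_sumn pos)).
  rewrite -map_comp map_id_in // => k kp /=.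
  by rewrite inordK // ltnS (leq_trans (mem_le_sumn kp)).
- by have m_x := m_le x; rewrite /= inordK; lia.
Qed.

Section SlopeBounds.

Variables (V E : finType) (src tgt : E -> V) (len : E -> R).
Hypothesis len_pos : forall e, 0 < len e.
Variable D : divisor V E.
Hypothesis D_eff : effective len D.
Hypothesis D_vs : vertex_supported D.
Variables (f : E -> R -> R) (h : V -> R).
Hypothesis f_ends : forall e, f e 0 = h (src e) /\ f e (len e) = h (tgt e).
Hypothesis f_pl : forall e, pl_int (len e) (f e).
Hypothesis f_RD : forall x, valid_pt len x -> 0 <= IZR (D x) + ord src tgt len f x.

Let a (e : E) := rslope (f e) 0.
Let b (e : E) := lslope (f e) (len e).
Let K := \big[Rplus/0]_(v : V) IZR (D (PV E v)).

Lemma edge_jumps_ge0 e t : 0 < t < len e -> 0 <= rslope (f e) t + lslope (f e) t.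
Proof. by move=> t_in; have := f_RD (x := PE V e t) t_in; rewrite D_vs /=; lra. Qed.

Lemma edge_slope_drop e x y :
  0 <= x -> x < y -> y <= len e -> rslope (f e) x <= - lslope (f e) y.
Proof. exact: (pl_int_slope_drop (f_pl e) (@edge_jumps_ge0 e)). Qed.

Lemma edge_chord e : a e * len e <= h (tgt e) - h (src e) <= - b e * len e.
Proof.
have [<- <-] := f_ends e.
exact: (pl_int_chord (len_pos e) (f_pl e) (@edge_jumps_ge0 e)).
Qed.

Definition up_closed (S : pred V) := forall u v, S u -> h u <= h v -> S v.

(* An edge leaving an upper level set of f descends, so its outgoing slope
   there is negative. *)
Lemma boundary_slope_up_closed_le0 S : up_closed S ->
  forall e, boundary_slope src tgt a b S e <= 0.
Proof.
move=> S_up e; rewrite /boundary_slope.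
have [chord1 chord2] := edge_chord e; have len_e := len_pos e.
have drop : a e <= - b e.
  exact: (edge_slope_drop (Rle_refl 0) len_e (Rle_refl (len e))).
case S_src: (S (src e)); case S_tgt: (S (tgt e)); try lra.
- have : h (tgt e) < h (src e).
    by apply: Rnot_le_lt => le; move: (S_up _ _ S_src le); rewrite S_tgt.
  nra.
- have : h (src e) < h (tgt e).
    by apply: Rnot_le_lt => le; move: (S_up _ _ S_tgt le); rewrite S_src.
  nra.
Qed.

Lemma boundary_slope_up_closed_ge S : up_closed S ->
  forall e, - K <= boundary_slope src tgt a b S e.
Proof.
move=> S_up; apply: boundary_slope_ge => [v|v|]; last exact: boundary_slope_up_closed_le0.
- by apply: IZR_le; apply: (D_eff (x := PV E v)).
- exact: (f_RD (x := PV E v)).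
Qed.

Let above (w : V) : pred V := fun v => if Rle_dec (h w) (h v) then true else false.

Lemma above_up_closed w : up_closed (above w).
Proof.
move=> u v; rewrite /above; case: Rle_dec => // wu _ uv.
by case: Rle_dec => // nle; exfalso; apply: nle; apply: Rle_trans wu uv.
Qed.

Lemma above_self w : above w w.
Proof.
by rewrite /above; case: Rle_dec => // nle; exfalso; apply: nle; apply: Rle_refl.
Qed.

Lemma above_below w v : h v < h w -> above w v = false.
Proof. by rewrite /above; case: Rle_dec => // le lt; lra. Qed.

Lemma edge_slope_sum_ge e : - K <= a e + b e.
Proof.
have := boundary_slope_up_closed_ge (S := predT) (fun _ _ _ _ => erefl) e.
by rewrite /boundary_slope.
Qed.

Lemma src_slope_ge e : - K <= a e.
Proof.
case: (Rlt_le_dec (h (tgt e)) (h (src e))) => [lt|le].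
  have := boundary_slope_up_closed_ge (@above_up_closed (src e)) e.
  by rewrite /boundary_slope above_self above_below //; lra.
have [_ chord] := edge_chord e; have := edge_slope_sum_ge e; have := len_pos e.
nra.
Qed.

Lemma tgt_slope_ge e : - K <= b e.
Proof.
case: (Rlt_le_dec (h (src e)) (h (tgt e))) => [lt|le].
  have := boundary_slope_up_closed_ge (@above_up_closed (tgt e)) e.
  by rewrite /boundary_slope above_self above_below //; lra.
have [chord _] := edge_chord e; have := edge_slope_sum_ge e; have := len_pos e.
nra.
Qed.

Lemma src_slope_le e : a e <= K.
Proof.
have := edge_slope_drop (Rle_refl 0) (len_pos e) (Rle_refl (len e)).
have := tgt_slope_ge e; rewrite /a /b; lra.
Qed.

Lemma tgt_slope_le e : b e <= K.
Proof.
have := edge_slope_drop (Rle_refl 0) (len_pos e) (Rle_refl (len e)).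
have := src_slope_ge e; rewrite /a /b; lra.
Qed.

Lemma vertex_coef_le (L : divisor V E) v : is_div_of src tgt len D f L ->
  IZR (L (PV E v)) <= K + (\big[Rplus/0]_(e : E) K + \big[Rplus/0]_(e : E) K).
Proof.
move=> [L_eq _]; rewrite (L_eq (PV E v) I).
have D_ge0 w : 0 <= IZR (D (PV E w)) by apply: IZR_le; apply: (D_eff (x := PV E w)).
have K_ge0 : 0 <= K by apply: sumR_ge0 => w _.
have Dv_le : IZR (D (PV E v)) <= K by apply: sumR_term_le.
have out_le (end_ : E -> V) (c : E -> R) : (forall e, c e <= K) ->
    \big[Rplus/0]_(e | end_ e == v) c e <= \big[Rplus/0]_(e : E) K.
  move=> c_le; apply: Rle_trans (sumR_le_sub _ (fun _ => K_ge0)).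
  exact: sumR_le (fun e _ => c_le e).
have := out_le src a src_slope_le; have := out_le tgt b tgt_slope_le.
have -> : ord src tgt len f (PV E v) = out_slope src tgt a b v by [].
rewrite /out_slope; lra.
Qed.

Lemma edge_degree_le (L : divisor V E) e (xs : seq R) (ps : seq nat) :
  is_div_of src tgt len D f L -> size xs = size ps ->
  (forall i, (i < size xs)%nat -> 0 < nth 0 xs i /\ nth 0 xs i < len e) ->
  (forall i, (i.+1 < size xs)%nat -> nth 0 xs i < nth 0 xs i.+1) ->
  (forall t, 0 < t < len e -> L (PE V e t) = pcoef xs ps t) ->
  INR (sumn ps) <= K.
Proof.
move=> [L_eq _] sz in_edge chain L_edge.
have incr := chain_lt chain.
have jump i : (i < size xs)%nat ->
    INR (nth 0%nat ps i) = rslope (f e) (nth 0 xs i) + lslope (f e) (nth 0 xs i).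
  move=> il; have x_in := in_edge i il.
  rewrite INR_IZR_INZ -(pcoef_nth sz incr il) -L_edge //.
  by rewrite (L_eq (PE V e _) x_in) D_vs /=; ring.
have := sumn_le_slope_drop (@edge_slope_drop e) sz (conj (Rle_refl 0) (len_pos e))
  incr in_edge jump.
have := edge_slope_sum_ge e; rewrite /a /b; lra.
Qed.

End SlopeBounds.

Lemma nonempty_cell_bounded (V E : finType) (src tgt : E -> V) (len : E -> R)
  (len_pos : forall e, 0 < len e) (D : divisor V E)
  (D_eff : effective len D) (D_vs : vertex_supported D) (N : nat) :
  let K := \big[Rplus/0]_(v : V) IZR (D (PV E v)) in
  K + (\big[Rplus/0]_(e : E) K + \big[Rplus/0]_(e : E) K) <= INR N ->
  forall c, cell_nonempty src tgt len D c -> cell_bounded N c.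
Proof.
move=> K N_ge [[d p] m] [L [[f [[[[h f_ends] f_pl] f_RD] L_div]] [L_v [L_e m_eq]]]].
have K_ge0 : 0 <= K.
  by apply: sumR_ge0 => v _; apply: IZR_le; exact: (D_eff (PV E v) I).
have KE_ge0 : 0 <= \big[Rplus/0]_(e : E) K by apply: sumR_ge0.
split; [|split].
- move=> v; have := vertex_coef_le len_pos D_eff D_vs f_ends f_pl f_RD v L_div.
  rewrite L_v -INR_IZR_INZ -/K => dv_le.
  by apply/leP; apply: INR_le; lra.
- move=> e; have [pos [xs [sz [in_edge [chain L_edge]]]]] := L_e e.
  split => //; apply/leP; apply: INR_le.
  have := edge_degree_le len_pos D_eff D_vs f_ends f_pl f_RD L_div sz in_edge chain
    L_edge.
  rewrite -/K; lra.
- move=> e; have := m_eq f (conj (conj (ex_intro _ h f_ends) f_pl) f_RD) L_div e.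
  have := src_slope_ge len_pos D_eff D_vs f_ends f_pl f_RD e.
  have := src_slope_le len_pos D_eff D_vs f_ends f_pl f_RD e.
  rewrite -/K => a_le a_ge a_eq; rewrite a_eq in a_le a_ge.
  have N_Z : K <= IZR (Z.of_nat N) by rewrite -INR_IZR_INZ; lra.
  apply/Z.abs_le; split; apply: le_IZR; rewrite ?opp_IZR; lra.
Qed.

Theorem corollary2p7 (V E : finType) (src tgt : E -> V) (len : E -> R)
  (len_pos : forall e, (0 < len e)%R)
  (conn : connected_graph src tgt)
  (D : divisor V E)
  (D_eff : effective len D) (D_vs : vertex_supported D) :
  finitely_many_cells src tgt len D.
Proof.
set K := \big[Rplus/0]_(v : V) IZR (D (PV E v)).
have [N N_gt] := INR_unbounded (K + (\big[Rplus/0]_(e : E) K + \big[Rplus/0]_(e : E) K)).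
have [cs cs_all] := cell_bounded_finite V E N.
exists cs => c /(nonempty_cell_bounded len_pos D_eff D_vs (Rlt_le _ _ N_gt)).
exact: cs_all.
Qed.
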